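(* Let $A$ be a countable alphabet, $P$ a transition probability kernel on $A$, and $w$ a finite string of symbols of $A$. If \[ \inf_{c\in A^{k}}\ \sum_{a\in A}\ \inf_{\underline{z}\in A^{-\mathbb{N}}}P(a\,|\,\underline{z}\,c)\ \xrightarrow[k\to\infty]{}\ 1, \] then \[ \inf_{c\in A^{k}(w)}\ \sum_{a\in A}\ \inf_{\underline{z}\in A^{-\mathbb{N}}}P(a\,|\,\underline{z}\,c)\ \xrightarrow[k\to\infty]{}\ 1, \] and this latter convergence implies that \[ \alpha^{w}_{k}:=\inf_{i\geq 0}\ \inf_{b\in \mathcal{I}^{i}(\bar w)}\ \inf_{c\in A^{k}}\ \sum_{a\in A}\ \inf_{\underline{z}\in A^{-\mathbb{N}}} P\big(a\,\big|\,\underline{z}\,c\,w\,b\big)\ \xrightarrow[k\to\infty]{}\ 1 . \]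
   Context: $A^{-\mathbb{N}}$ is the set of infinite pasts $\underline{z}=\ldots z_{-2}z_{-1}$, $A^k$ the set of strings of length $k$. Strings are written in chronological order: $\underline{z}\,u\,v$ is the infinite past obtained by appending finite strings $u$ then $v$ after $\underline{z}$ (the last symbols of $v$ being the most recent). A transition probability kernel is a map $P:A\times A^{-\mathbb{N}}\to[0,1]$ with $\sum_a P(a|\underline{z})=1$ for every $\underline{z}$. For $k\ge |w|$, $A^k(w)$ is the set of strings of length $k$ that contain $w$ as a (contiguous) substring. For a string $x=x_{-m}\ldots x_{-1}$, $m^w(x)=\inf\{k\ge0: x_{-k-|w|}\ldots x_{-k-1}=w\}$ ($+\infty$ if none). $\mathcal{I}^{i}(\bar w)$ is the set of strings $b\in A^i$ equal to $a_{-i}\ldots a_{-1}$ for some infinite past $\underline{a}$ with $m^w(\underline{a})=i$, i.e. strings $b$ of length $i$ such that in $w\,b$ the string $w$ occurs only as the prefix ($\mathcal{I}^0(\bar w)=\{\emptyset\}$). *)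

From HB Require Import structures.
From mathcomp Require Import all_boot all_order all_algebra.
From mathcomp Require Import all_classical all_reals all_analysis.
Set Implicit Arguments. Unset Strict Implicit. Unset Printing Implicit Defensive.
Import Order.TTheory GRing.Theory Num.Theory.
Local Open Scope classical_set_scope.
Local Open Scope ring_scope.

Section Defs.
Variable A : countType.

(* An infinite past z = ... z_{-2} z_{-1} is encoded as z : nat -> A with
   z n = z_{-(n+1)} (index 0 is the most recent symbol). *)
Definition past := nat -> A.

(* z u : append the finite string u (chronological order, last symbol of u
   the most recent) after the past z. *)
Definition cat_past (z : past) (u : seq A) : past :=
  fun n => if (n < size u)%N then nth (z 0%N) (rev u) n else z (n - size u)%N.

Definition strings (k : nat) : set (seq A) := [set c | size c = k].

Definition strings_with (w : seq A) (k : nat) : set (seq A) :=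
  [set c | size c = k /\ infix w c].

(* w occurs in x ending k symbols before the end of x, i.e.
   x_{-k-|w|} ... x_{-k-1} = w *)
Definition occ_at (w x : seq A) (k : nat) : bool :=
  ((size w + k <= size x)%N) &&
  (take (size w) (drop (size x - k - size w) x) == w).

(* m^w(x) for a finite string x; None stands for +infinity *)
Definition mw (w x : seq A) : option nat :=
  let k := find (occ_at w x) (iota 0 (size x).+1) in
  if (k < (size x).+1)%N then Some k else None.

(* I^i(bar w): strings b of length i such that m^w(w b) = i, i.e. w occurs
   in w b only as the prefix *)
Definition Iw (w : seq A) (i : nat) : set (seq A) :=
  [set b | size b = i /\ mw w (w ++ b) = Some i].

Variable R : realType.

Definition is_kernel (P : A -> past -> R) : Prop :=
  (forall a z, 0 <= P a z <= 1) /\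
  (forall z, (\esum_(a in [set: A]) (P a z)%:E = 1%E)).

Definition inf_mass (P : A -> past -> R) (u : seq A) : \bar R :=
  \esum_(a in [set: A]) ereal_inf [set (P a (cat_past z u))%:E | z in [set: past]].

Definition coef (P : A -> past -> R) (S : set (seq A)) : \bar R :=
  ereal_inf [set inf_mass P c | c in S].

Definition alpha (P : A -> past -> R) (w : seq A) (k : nat) : \bar R :=
  ereal_inf [set x | exists (i : nat) (b : seq A) (c : seq A),
                 Iw w i b /\ strings k c /\ x = inf_mass P (c ++ w ++ b)].
End Defs.

From mathcomp Require Import all_boot all_order all_algebra.
From mathcomp Require Import all_classical all_reals all_analysis.
Set Implicit Arguments. Unset Strict Implicit. Unset Printing Implicit Defensive.
Import Order.TTheory GRing.Theory Num.Theory.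
Local Open Scope classical_set_scope.
Local Open Scope ring_scope.
Local Open Scope ereal_scope.

(* Every coefficient is at most 1, since for a fixed past the infima are
   dominated by a probability vector; so it suffices to bound the new
   coefficients from below by the old ones.  A string of A^k(w) is in
   particular in A^k, and a string c w b with c in A^k and b in I^i(bar w)
   is in A^(k+|w|+i)(w), so alpha^w_k dominates the tail infimum of the
   A^n(w)-coefficients. *)

Section Coefficients.
Variables (A : countType) (R : realType) (P : A -> past A -> R).

Lemma inf_mass_le1 (u : seq A) : is_kernel P -> past A -> inf_mass P u <= 1.
Proof.
move=> [_ Psum] z; rewrite /inf_mass -(Psum (cat_past z u)).
by apply: le_esum => a _; apply: ereal_inf_lbound; exists z.
Qed.

Lemma coef_le1 (S : set (seq A)) (c : seq A) :
  is_kernel P -> past A -> S c -> coef P S <= 1.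
Proof.
move=> Pk z Sc; apply: le_trans (inf_mass_le1 c Pk z).
by apply: ereal_inf_lbound; exists c.
Qed.

Lemma coef_subset (S T : set (seq A)) : S `<=` T -> coef P T <= coef P S.
Proof. by move=> ST; apply: ereal_inf_le_tmp => _ [c Sc <-]; exists c; first exact: ST. Qed.

(* The infimum over an empty set of strings is +oo, so convergence to 1
   forces the sets to be eventually nonempty, and a nonempty string of
   A^k exhibits a symbol. *)
Lemma inhabited_of_cvg_coef (S : nat -> set (seq A)) :
  (forall k c, S k c -> size c = k) ->
  (fun k => coef P (S k)) @ \oo --> (1%:E : \bar R) -> inhabited A.
Proof.
move=> sizeS /fine_cvgP[[N _ finN] _].
have := finN N.+1 (leqnSn N) => /=; rewrite /coef.
have [[[|a c] Sc] _|/set0P/negP/negbNE/eqP ->] := pselect (S N.+1 !=set0).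
- by have := sizeS _ _ Sc.
- by constructor.
- by rewrite image_set0 ereal_inf0.
Qed.

End Coefficients.

Lemma strings_with_nseq (A : countType) (w : seq A) (a : A) (k : nat) :
  (size w <= k)%N -> strings_with w k (nseq (k - size w) a ++ w).
Proof.
by move=> wk; split; [rewrite size_cat size_nseq subnK | exact: suffix_infix].
Qed.

Lemma Iw0 (A : countType) (w : seq A) : Iw w 0 [::].
Proof.
split=> //; rewrite cats0 /mw.
by rewrite /= /occ_at addn0 leqnn subn0 subnn drop0 take_size eqxx.
Qed.

Lemma einfs_coef_strings_with_le_alpha (A : countType) (R : realType)
    (P : A -> past A -> R) (w : seq A) (k : nat) :
  einfs (fun n => coef P (strings_with w n)) k <= alpha P w k.
Proof.
apply: le_ereal_inf_tmp => _ [i [b [c [_ [sizec ->]]]]].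
apply: (@le_trans _ _ (coef P (strings_with w (size (c ++ w ++ b))))).
  by apply: ereal_inf_lbound; exists (size (c ++ w ++ b)); rewrite //= size_cat sizec leq_addr.
apply: ereal_inf_lbound; exists (c ++ w ++ b) => //.
by split=> //; exact: infix_infix.
Qed.

Lemma alpha_le1 (A : countType) (R : realType) (P : A -> past A -> R)
    (w : seq A) (a : A) (k : nat) :
  is_kernel P -> alpha P w k <= 1.
Proof.
move=> Pk; apply: le_trans (inf_mass_le1 (nseq k a ++ w ++ [::]) Pk (fun=> a)).
apply: ereal_inf_lbound; exists 0%N, [::], (nseq k a).
split; first exact: Iw0.
by split=> //; rewrite /strings /= size_nseq.
Qed.

Theorem proposition1 (A : countType) (R : realType) (P : A -> past A -> R)
    (w : seq A) :
  is_kernel P ->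
  (((fun k => coef P (@strings A k)) @ \oo --> (1%:E : \bar R)) ->
     (fun k => coef P (strings_with w k)) @ \oo --> (1%:E : \bar R)) /\
  (((fun k => coef P (strings_with w k)) @ \oo --> (1%:E : \bar R)) ->
     (fun k => alpha P w k) @ \oo --> (1%:E : \bar R)).
Proof.
move=> Pk; split=> cvg1.
- have [a] := inhabited_of_cvg_coef (fun k c (h : strings k c) => h) cvg1.
  apply: (squeeze_cvge _ cvg1 (cvg_cst _)).
  exists (size w) => // k /= wk; rewrite coef_subset; last by move=> c [].
  exact: coef_le1 Pk (fun=> a) (strings_with_nseq a wk).
- have [a] := inhabited_of_cvg_coef (fun k c (h : strings_with w k c) => h.1) cvg1.
  apply: (squeeze_cvge _ (cvg_einfs cvg1) (cvg_cst _)).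
  exists 0%N => // k _ /=.
  by rewrite einfs_coef_strings_with_le_alpha (alpha_le1 w a k Pk).
Qed.
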